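(* Let $G=(V,E)$ be a $D$-regular bipartite unweighted graph satisfying $CD(2,\infty)$ at some vertex $x\in V$. Then $x$ satisfies the small sphere property (SSP) and the non-clustering property (NCP).
   Context: The Laplacian of an unweighted graph is $\Delta f(x)=\sum_{y\sim x}(f(y)-f(x))$. $2\Gamma(f,g)=\Delta(fg)-f\Delta g-g\Delta f$, $2\Gamma_2(f,g)=\Delta\Gamma(f,g)-\Gamma(f,\Delta g)-\Gamma(g,\Delta f)$, $\Gamma f=\Gamma(f,f)$, $\Gamma_2f=\Gamma_2(f,f)$. $G$ satisfies $CD(K,\infty)$ at $x$ if $\Gamma_2f(x)\ge K\Gamma f(x)$ for all $f:V\to\mathbb R$. $d$ is the combinatorial distance, $S_k(x)=\{y:d(x,y)=k\}$, and $d_-^x(z)=\#\{y\sim z: d(y,x)<d(z,x)\}$. For a $D$-regular unweighted graph and a vertex $x$: (SSP) holds at $x$ if $\#S_2(x)\le\binom D2$; (NCP) holds at $x$ if, whenever $d_-^x(z)=2$ for all $z\in S_2(x)$, for every $y_1,y_2\in S_1(x)$ there is at most one $z\in S_2(x)$ with $y_1\sim z\sim y_2$. *)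

From HB Require Import structures.
From mathcomp Require Import all_boot all_order all_algebra.
Set Implicit Arguments. Unset Strict Implicit. Unset Printing Implicit Defensive.
Import Order.TTheory GRing.Theory Num.Theory.

(* A (locally finite, simple, unweighted) graph on a vertex type V : eqType is
   given by its neighbour lists  N : V -> seq V ;  y ~ x  iff  y \in N x.
   The structural hypotheses (no repeated neighbour, no loops, symmetry,
   D-regularity, bipartiteness) are stated as explicit hypotheses of the
   theorem. *)

Section Graph.
Variable V : eqType.
Variable N : V -> seq V.

Definition adj (a b : V) : bool := b \in N a.

Definition walk (n : nat) (a b : V) : Prop :=
  exists p : seq V, size p = n /\ path adj a p /\ last a p = b.

Definition dist_le (a b : V) (k : nat) : Prop :=
  exists m, (m <= k)%N /\ walk m a b.

Definition dist (a b : V) (k : nat) : Prop :=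
  walk k a b /\ forall m, (m < k)%N -> ~ walk m a b.

(* d(a,b) < d(c,e)  (with the convention d = +oo between different components) *)
Definition dist_lt (a b c e : V) : Prop :=
  exists k, dist_le a b k /\ ~ dist_le c e k.

Definition sphere (x : V) (k : nat) (y : V) : Prop := dist x y k.

Definition dminus_is (x z : V) (m : nat) : Prop :=
  exists s : seq V, uniq s /\ size s = m /\
    forall y, y \in s <-> (adj z y /\ dist_lt y x z x).

Definition SSP (D : nat) (x : V) : Prop :=
  forall s : seq V, uniq s -> (forall z, z \in s -> sphere x 2 z) ->
    (size s <= 'C(D, 2))%N.

Definition NCP (x : V) : Prop :=
  (forall z, sphere x 2 z -> dminus_is x z 2) ->
  forall y1 y2, sphere x 1 y1 -> sphere x 1 y2 -> y1 <> y2 ->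
  forall z1 z2, sphere x 2 z1 -> sphere x 2 z2 ->
    adj y1 z1 -> adj z1 y2 -> adj y1 z2 -> adj z2 y2 -> z1 = z2.

Variable R : realFieldType.
Local Open Scope ring_scope.

Definition lap (f : V -> R) (x : V) : R := \sum_(y <- N x) (f y - f x).

Definition Gam (f g : V -> R) (x : V) : R :=
  (lap (fun z => f z * g z) x - f x * lap g x - g x * lap f x) / 2%:R.

Definition Gam2 (f g : V -> R) (x : V) : R :=
  (lap (Gam f g) x - Gam f (lap g) x - Gam g (lap f) x) / 2%:R.

Definition CD_at (K : R) (x : V) : Prop :=
  forall f : V -> R, K * Gam f f x <= Gam2 f f x.

End Graph.

From HB Require Import structures.
From mathcomp Require Import all_boot all_order all_algebra.
From mathcomp Require Import ring lra zify.
Import Order.TTheory GRing.Theory Num.Theory.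
Set Implicit Arguments. Unset Strict Implicit. Unset Printing Implicit Defensive.
Local Open Scope ring_scope.

(* Gamma_2 f (x) expands into a sum over the 2-walks from x, and in a
   bipartite graph these end at x or in S_2(x).  With f x = 0, f = v on S_1(x)
   and f z = twice the mean of v over the S_1-neighbours of z, CD(2,oo) becomes
     2D sum v^2 <= 4 sum_(z in S_2) (variance sum of v over N(z) /\ S_1)
                    + 2 (sum v)^2.
   For v the indicator of one y in S_1 this gives, summed over y,
   2D^2 <= 4 (D(D-1) - #S_2) + 2D, which is (SSP).  When every z in S_2 has
   exactly two neighbours in S_1, v = 1_(y1) - 1_(y2) forces y1 and y2 to have
   a common neighbour in S_2; a double count of the edges between
   S_1 \ {y1} and N(y1) /\ S_2 then forbids a second one, which is (NCP). *)

Lemma sumr_const_seq (M : nmodType) (I : Type) (r : seq I) (P : pred I) (c : M) :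
  \sum_(i <- r | P i) c = c *+ count P r.
Proof. by rewrite big_const_seq iter_addr_0. Qed.

Lemma sumr_natr_count (R : pzSemiRingType) (I : Type) (r : seq I) (P Q : pred I) :
  \sum_(i <- r | P i) (Q i)%:R = (count (fun i => P i && Q i) r)%:R :> R.
Proof.
elim: r => [|a r IH]; first by rewrite big_nil.
by rewrite big_cons /= IH; case: (P a); case: (Q a); rewrite /= ?add0r ?natrD.
Qed.

Lemma natr_bool_sqr (R : pzRingType) (b : bool) : (b%:R : R) ^+ 2 = b%:R.
Proof. by case: b; rewrite ?expr1n // expr2 mulr0. Qed.

Lemma count_and_pred1 (T : eqType) (r : seq T) (P : pred T) (c : T) :
  uniq r -> c \in r -> count (fun y => P y && (y == c)) r = P c.
Proof.
move=> ur cr; rewrite (@eq_count _ _ (fun y => P c && (y == c))); last first.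
  by move=> y; case: eqP => [->|]; rewrite ?andbF.
by case: (P c); rewrite /= ?count_pred0 // (count_uniq_mem _ ur) cr.
Qed.

Lemma count_sumn (T : Type) (a : pred T) (s : seq T) :
  count a s = \sum_(i <- s) (a i : nat).
Proof. by rewrite -sum1_count big_mkcond. Qed.

Lemma sum_count_exchange (T U : Type) (e : T -> U -> bool) (r : seq T) (s : seq U) :
  \sum_(i <- r) count (fun j => e i j) s = \sum_(j <- s) count (fun i => e i j) r.
Proof.
under eq_bigr => i _ do rewrite count_sumn.
under [RHS]eq_bigr => j _ do rewrite count_sumn.
exact: exchange_big.
Qed.

Lemma sum_indicator (R : pzSemiRingType) (T : eqType) (r : seq T) (c : T) :
  uniq r -> c \in r -> \sum_(y <- r) ((y == c)%:R : R) = 1.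
Proof. by move=> ur cr; rewrite sumr_natr_count count_and_pred1. Qed.

Lemma walk0_eq (V : eqType) (N : V -> seq V) a b : walk N 0 a b -> a = b.
Proof. by case=> p [sp [pp lp]]; case: p sp pp lp => [|? ?] //= _ _ <-. Qed.

Lemma walk1P (V : eqType) (N : V -> seq V) a b : walk N 1 a b <-> b \in N a.
Proof.
split; last by move=> h; exists [:: b]; rewrite /= /adj h.
case=> p [sp [pp lp]]; case: p sp pp lp => [|w [|? ?]] //= _.
by rewrite andbT => h <-.
Qed.

Lemma walk2P (V : eqType) (N : V -> seq V) a b :
  walk N 2 a b <-> exists2 w, w \in N a & b \in N w.
Proof.
split; last by case=> w h1 h2; exists [:: w; b]; rewrite /= /adj h1 h2.
case=> p [sp [pp lp]]; case: p sp pp lp => [|w [|u [|? ?]]] //= _.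
by rewrite andbT => /andP [h1 h2] <-; exists w.
Qed.

Section GammaCalculus.
Variables (R : realFieldType) (V : eqType) (N : V -> seq V) (D : nat).
Hypothesis Hreg : forall a, size (N a) = D.

Lemma Gam_sum (f g : V -> R) a :
  Gam N f g a = (\sum_(y <- N a) (f y - f a) * (g y - g a)) / 2%:R.
Proof.
rewrite /Gam /lap !mulr_sumr -!sumrB; congr (_ / _).
by apply: eq_bigr => y _; ring.
Qed.

Lemma Gam2_sum (f : V -> R) a :
  4%:R * Gam2 N f f a =
  \sum_(y <- N a) \sum_(z <- N y) (f z - 2%:R * f y + f a) ^+ 2
  - (2 * D)%:R * \sum_(y <- N a) (f y - f a) ^+ 2
  + 2%:R * (\sum_(y <- N a) (f y - f a)) ^+ 2.
Proof.
have -> : 4%:R * Gam2 N f f a =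
    2%:R * lap N (Gam N f f) a - 4%:R * Gam N f (lap N f) a.
  by rewrite /Gam2; field.
rewrite Gam_sum /lap.
under eq_bigr => y _ do rewrite !Gam_sum.
set A1 := \sum_(y <- N a) (f y - f a).
set A2 := \sum_(y <- N a) (f y - f a) ^+ 2.
rewrite mulr_suml [2%:R * _]mulr_sumr [4%:R * _]mulr_sumr -sumrB.
have summand y :
    2%:R * ((\sum_(z <- N y) (f z - f y) * (f z - f y)) / 2%:R - A2 / 2%:R)
    - 4%:R * ((f y - f a) * (\sum_(z <- N y) (f z - f y) - A1) / 2%:R)
  = \sum_(z <- N y) (f z - 2%:R * f y + f a) ^+ 2
    - \sum_(z <- N y) (f y - f a) ^+ 2 - A2 + 2%:R * (f y - f a) * A1.
  have -> : \sum_(z <- N y) (f z - 2%:R * f y + f a) ^+ 2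
            - \sum_(z <- N y) (f y - f a) ^+ 2
          = \sum_(z <- N y) (f z - f y) * (f z - f y)
            - 2%:R * (f y - f a) * \sum_(z <- N y) (f z - f y).
    by rewrite mulr_sumr -!sumrB; apply: eq_bigr => z _; ring.
  by field.
under eq_bigr => y _ do rewrite summand.
rewrite big_split /= !sumrB sumr_const_seq count_predT Hreg.
have -> : \sum_(y <- N a) \sum_(z <- N y) (f y - f a) ^+ 2 = D%:R * A2.
  rewrite /A2 mulr_sumr; apply: eq_bigr => y _.
  by rewrite sumr_const_seq count_predT Hreg mulr_natl.
rewrite -mulr_suml -mulr_sumr natrM -mulr_natl -/A1.
by clearbody A1 A2; ring.
Qed.

End GammaCalculus.

Section SecondSphere.
Variables (V : eqType) (N : V -> seq V) (D : nat).
Hypothesis Huniq : forall a, uniq (N a).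
Hypothesis Hloop : forall a, a \notin N a.
Hypothesis Hsym : forall a b, (b \in N a) = (a \in N b).
Hypothesis Hreg : forall a, size (N a) = D.
Variable col : V -> bool.
Hypothesis Hcol : forall a b, b \in N a -> col a != col b.
Variable x : V.

(* Without bipartiteness this would also contain the vertices of S_1(x)
   lying on a triangle through x. *)
Definition S2 := undup [seq z <- flatten (map N (N x)) | z != x].

(* [dminus z] is d_-^x(z) for z in S_2(x). *)
Definition dminus z := count (fun y => z \in N y) (N x).

Lemma S2P z : reflect (z != x /\ exists2 y, y \in N x & z \in N y) (z \in S2).
Proof.
rewrite mem_undup mem_filter; apply: (iffP andP) => [] [-> h];
by split=> //; apply/flatten_mapP.
Qed.

Lemma uniq_S2 : uniq S2. Proof. exact: undup_uniq. Qed.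

Lemma S2_notin_N1 z : z \in S2 -> z \notin N x.
Proof.
case/S2P=> _ [y hy hz]; apply/negP => hx.
by move: (Hcol hy) (Hcol hz) (Hcol hx); case: (col x); case: (col y); case: (col z).
Qed.

Lemma N1_neq y : y \in N x -> y != x.
Proof. by move=> hy; apply/eqP => e; move: (Hloop x); rewrite -{1}e hy. Qed.

Lemma dminus_gt0 z : z \in S2 -> (0 < dminus z)%N.
Proof. by case/S2P=> _ [y hy hz]; rewrite -has_count; apply/hasP; exists y. Qed.

Lemma size_N_rem y : y \in N x -> size (rem x (N y)) = D.-1.
Proof. by move=> hy; rewrite size_rem ?Hreg // -Hsym. Qed.

Lemma sum_N2_exchange (R : nmodType) (F : V -> V -> R) :
  \sum_(y <- N x) \sum_(z <- rem x (N y)) F y z =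
  \sum_(z <- S2) \sum_(y <- N x | z \in N y) F y z.
Proof.
transitivity (\sum_(y <- N x) \sum_(z <- S2 | z \in N y) F y z).
  apply: eq_big_seq => y hy; rewrite -[RHS]big_filter; apply: perm_big.
  apply: uniq_perm; rewrite ?rem_uniq ?filter_uniq ?uniq_S2 // => z.
  rewrite mem_filter (mem_rem_uniq _ (Huniq y)) inE.
  apply/andP/andP => [[zx zy]|[zy /S2P [zx _]]]; last by [].
  by split=> //; apply/S2P; split=> //; exists y.
under eq_bigr => y _ do rewrite big_mkcond.
by rewrite exchange_big; apply: eq_bigr => z _; rewrite [RHS]big_mkcond.
Qed.

Lemma sum_dminus (R : pzSemiRingType) : \sum_(z <- S2) ((dminus z)%:R : R) = (D * D.-1)%:R.
Proof.
under eq_bigr => z _ do rewrite /dminus -sumr_const_seq.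
rewrite -(sum_N2_exchange (fun _ _ => 1)) (eq_big_seq (fun _ => (D.-1)%:R)); last first.
  by move=> y hy; rewrite sumr_const_seq count_predT size_N_rem.
by rewrite sumr_const_seq count_predT Hreg mulnC mulrnA.
Qed.

Lemma sum_adj_S2 (R : pzSemiRingType) c :
  c \in N x -> \sum_(z <- S2) ((z \in N c)%:R : R) = (D.-1)%:R.
Proof.
move=> hc; have := sum_N2_exchange (fun y _ => ((y == c)%:R : R)).
rewrite (eq_big_seq (fun y => ((y == c)%:R : R) *+ D.-1)); last first.
  by move=> y hy; rewrite sumr_const_seq count_predT size_N_rem.
rewrite sumrMnl sum_indicator // => ->; apply: eq_bigr => z _.
by rewrite sumr_natr_count count_and_pred1.
Qed.

Lemma sphere1_N1 y : sphere N x 1 y -> y \in N x.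
Proof. by case=> /walk1P. Qed.

Lemma sphere2P z : sphere N x 2 z <-> z \in S2.
Proof.
split=> [[/walk2P [w h1 h2] hn]|hz].
  apply/S2P; split; last by exists w.
  by apply: contra_notN (hn 0%N isT) => /eqP <-; exists [::].
have zN := S2_notin_N1 hz; case/S2P: hz => zx [w h1 h2].
split=> [|[|[|m]] // _]; first by apply/walk2P; exists w.
  by move/walk0_eq => e; move: zx; rewrite e eqxx.
by move/walk1P => h; move: zN; rewrite h.
Qed.

Lemma dist_lt_S2 z y : z \in S2 -> y \in N z ->
  dist_lt N y x z x <-> y \in N x.
Proof.
move=> hz hy; have zN := S2_notin_N1 hz; case/S2P: (hz) => zx [w hw hzw].
have dz : dist_le N z x 2.
  by exists 2%N; split=> //; apply/walk2P; exists w; rewrite -Hsym.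
split=> [[k [[m [hm wm]] hnd]]|hyx].
  have hk : (k <= 1)%N.
    rewrite leqNgt; apply/negP => hk; apply: hnd.
    by case: dz => m' [hm' wm']; exists m'; split=> //; lia.
  case: m hm wm => [|[|m]] hm wm; last by lia.
    by move/walk0_eq: wm hy => ->; rewrite Hsym (negbTE zN).
  by move/walk1P: wm; rewrite Hsym.
exists 1%N; split; first by exists 1%N; split=> //; apply/walk1P; rewrite -Hsym.
case=> [[|[|m]] [hm wm]] //.
  by move/walk0_eq: wm zx => ->; rewrite eqxx.
by move/walk1P: wm zN; rewrite -Hsym => ->.
Qed.

Lemma dminus_isE z m : z \in S2 -> dminus_is N x z m -> dminus z = m.
Proof.
move=> hz [s [us [<- hs]]]; rewrite /dminus -size_filter; apply/perm_size.
apply: uniq_perm; rewrite ?filter_uniq // => y.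
rewrite mem_filter; apply/idP/idP.
  case/andP=> hzy hy; have hyz : y \in N z by rewrite -Hsym.
  by apply/(hs y).2; split; last exact/(dist_lt_S2 hz hyz).2.
move=> ys; have [hzy hlt] := (hs y).1 ys.
by rewrite (dist_lt_S2 hz hzy).1 // andbT -Hsym.
Qed.

Section CurvatureInequalities.
Variable R : realFieldType.
Hypothesis HCD : CD_at N (2%:R : R) x.

Lemma CD2_N2 (f : V -> R) :
  (2 * D + 4)%:R * \sum_(y <- N x) (f y - f x) ^+ 2 <=
  \sum_(y <- N x) \sum_(z <- N y) (f z - 2%:R * f y + f x) ^+ 2
  + 2%:R * (\sum_(y <- N x) (f y - f x)) ^+ 2.
Proof.
have hCD := HCD f; have e := Gam2_sum Hreg f x.
rewrite Gam_sum (eq_bigr (fun y => (f y - f x) ^+ 2)) in hCD; last by move=> y _; rewrite expr2.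
move: hCD e; rewrite natrD !natrM.
set A2 := \sum_(y <- N x) _ ^+ 2; set P := \sum_(y <- N x) _.
set A1 := \sum_(y <- N x) _ => hCD e.
lra.
Qed.

Lemma CD2_S2 (f : V -> R) : f x = 0 ->
  (2 * D)%:R * \sum_(y <- N x) f y ^+ 2 <=
  \sum_(z <- S2) \sum_(y <- N x | z \in N y) (f z - 2%:R * f y) ^+ 2
  + 2%:R * (\sum_(y <- N x) f y) ^+ 2.
Proof.
move=> fx; have h := CD2_N2 f; rewrite fx in h.
rewrite (eq_bigr (fun y => f y ^+ 2)) in h; last by move=> y _; rewrite subr0.
rewrite [X in 2%:R * X ^+ 2](eq_bigr (fun y => f y)) in h; last by move=> y _; rewrite subr0.
have eP : \sum_(y <- N x) \sum_(z <- N y) (f z - 2%:R * f y + 0) ^+ 2 =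
    4%:R * \sum_(y <- N x) f y ^+ 2 +
    \sum_(y <- N x) \sum_(z <- rem x (N y)) (f z - 2%:R * f y) ^+ 2.
  rewrite mulr_sumr -big_split; apply: eq_big_seq => y hy.
  have xy : x \in N y by rewrite -Hsym.
  rewrite (perm_big _ (perm_to_rem xy)) big_cons fx.
  congr (_ + _); first ring.
  by apply: eq_bigr => z _; rewrite addr0.
rewrite eP sum_N2_exchange in h.
move: h; set A2 := \sum_(y <- N x) _ ^+ 2; set S := \sum_(z <- S2) _.
set A1 := \sum_(y <- N x) _; rewrite !natrD ?natrM => h.
lra.
Qed.

Definition sum_down (v : V -> R) z := \sum_(y <- N x | z \in N y) v y.

Lemma CD2_variance (v : V -> R) :
  (2 * D)%:R * \sum_(y <- N x) v y ^+ 2 <=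
  \sum_(z <- S2) 4%:R * (sum_down (fun y => v y ^+ 2) z - sum_down v z ^+ 2 / (dminus z)%:R)
  + 2%:R * (\sum_(y <- N x) v y) ^+ 2.
Proof.
(* the value at z minimising sum_(y ~ z) (f z - 2 v y)^2 is twice the mean *)
pose f a := if a == x then 0 else if a \in N x then v a
            else 2%:R * sum_down v a / (dminus a)%:R.
have fy y : y \in N x -> f y = v y by move=> hy; rewrite /f (negbTE (N1_neq hy)) hy.
have fx : f x = 0 by rewrite /f eqxx.
have := CD2_S2 fx.
have -> : \sum_(y <- N x) f y ^+ 2 = \sum_(y <- N x) v y ^+ 2.
  by apply: eq_big_seq => y hy; rewrite fy.
have -> : \sum_(y <- N x) f y = \sum_(y <- N x) v y.
  by apply: eq_big_seq => y hy; rewrite fy.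
congr (_ <= _ + _); apply: eq_big_seq => z hz.
have -> : f z = 2%:R * sum_down v z / (dminus z)%:R.
  by rewrite /f (negbTE (S2_notin_N1 hz)); case/S2P: hz => /negbTE ->.
set c := 2%:R * sum_down v z / (dminus z)%:R.
have -> : \sum_(y <- N x | z \in N y) (c - 2%:R * f y) ^+ 2 =
    \sum_(y <- N x | z \in N y) (c ^+ 2 + (- (4%:R * c) * v y + 4%:R * v y ^+ 2)).
  rewrite big_seq_cond [RHS]big_seq_cond; apply: eq_bigr => y /andP [hy _].
  by rewrite fy //; ring.
rewrite !big_split /= sumr_const_seq -!mulr_sumr -/(dminus z).
have kz : (dminus z)%:R != 0 :> R by rewrite pnatr_eq0 -lt0n dminus_gt0.
by rewrite /c /sum_down; field.
Qed.

Lemma CD2_indicator c : c \in N x ->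
  (2 * D)%:R <= \sum_(z <- S2) 4%:R * ((z \in N c)%:R * (1 - (dminus z)%:R^-1))
                + 2%:R :> R.
Proof.
move=> hc; have := CD2_variance (fun y => (y == c)%:R).
have sd z : sum_down (fun y => (y == c)%:R) z = (z \in N c)%:R.
  by rewrite /sum_down sumr_natr_count count_and_pred1.
under [X in _ * X]eq_bigr => y _ do rewrite natr_bool_sqr.
rewrite sum_indicator // mulr1 expr1n mulr1.
set lhs := \sum_(z <- S2) _; suff -> : lhs = \sum_(z <- S2) 4%:R *
    ((z \in N c)%:R * (1 - (dminus z)%:R^-1)) by [].
apply: eq_bigr => z _.
have sd2 : sum_down (fun y => (y == c)%:R ^+ 2) z = (z \in N c)%:R.
  by rewrite -sd; apply: eq_bigr => y _; rewrite natr_bool_sqr.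
by rewrite sd2 sd natr_bool_sqr; congr (_ * _); ring.
Qed.

Lemma size_S2_le : (2 * size S2 <= D * D.-1)%N.
Proof.
have h : \sum_(c <- N x) ((2 * D)%:R : R) <=
    \sum_(c <- N x) (\sum_(z <- S2) 4%:R * ((z \in N c)%:R * (1 - (dminus z)%:R^-1))
                     + 2%:R).
  by rewrite big_seq [leRHS]big_seq; apply: ler_sum => c; apply: CD2_indicator.
rewrite big_split /= exchange_big /= !sumr_const_seq count_predT Hreg in h.
have e : \sum_(z <- S2) \sum_(c <- N x) 4%:R * ((z \in N c)%:R * (1 - (dminus z)%:R^-1))
    = \sum_(z <- S2) (4%:R * ((dminus z)%:R - 1) : R).
  apply: eq_big_seq => z hz.
  have kz : (dminus z)%:R != 0 :> R by rewrite pnatr_eq0 -lt0n dminus_gt0.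
  rewrite -mulr_sumr -mulr_suml sumr_natr_count /=.
  by congr (_ * _); rewrite -/(dminus z); field.
rewrite e -mulr_sumr sumrB sum_dminus sumr_const_seq count_predT in h.
have hD : (D * D = D * D.-1 + D)%N by case: (D) => //= n; rewrite mulnS; lia.
suff : ((2 * (D * D) + 4 * size S2)%:R : R) <= (4 * (D * D.-1) + 2 * D)%:R.
  by rewrite ler_nat; lia.
have e1 : (2 * D)%:R *+ D = (2 * (D * D))%:R :> R by rewrite -mulrnA mulnA.
have e2 : 2%:R *+ D = (2 * D)%:R :> R by rewrite -mulrnA.
move: h; rewrite e1 e2 hD; move: (D * D.-1)%N (size S2) => a b.
by rewrite !natrD ?natrM; lra.
Qed.

Lemma common_neighbor_S2 (dminus2 : forall z, z \in S2 -> dminus z = 2%N) y1 y2 :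
  y1 \in N x -> y2 \in N x -> y1 != y2 ->
  exists2 z, z \in S2 & (z \in N y1) && (z \in N y2).
Proof.
move=> hy1 hy2 ny12.
apply/hasP/negPn/negP => /hasPn hn.
pose v y := ((y == y1)%:R - (y == y2)%:R : R).
have sqv y : v y ^+ 2 = (y == y1)%:R + (y == y2)%:R.
  rewrite /v; case: (eqVneq y y1) => [->|_]; rewrite ?(negbTE ny12) /=.
    by rewrite subr0 expr1n addr0.
  by case: (y == y2); rewrite /= ?sub0r ?sqrrN ?expr1n ?expr0n ?subr0 ?add0r.
have h := CD2_variance v.
have ev2 : \sum_(y <- N x) v y ^+ 2 = 2%:R.
  by rewrite (eq_bigr _ (fun y _ => sqv y)) big_split /= !sum_indicator.
have ev1 : \sum_(y <- N x) v y = 0 by rewrite sumrB !sum_indicator // subrr.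
have var z : z \in S2 ->
    4%:R * (sum_down (fun y => v y ^+ 2) z - sum_down v z ^+ 2 / (dminus z)%:R) =
    2%:R * ((z \in N y1)%:R + (z \in N y2)%:R).
  move=> hz; have := hn z hz.
  rewrite /sum_down (eq_bigr _ (fun y _ => sqv y)) big_split /= sumrB.
  rewrite !sumr_natr_count !count_and_pred1 // dminus2 //.
  by case: (z \in N y1); case: (z \in N y2) => //= _; field.
rewrite ev2 ev1 (eq_big_seq _ var) -mulr_sumr big_split /= !sum_adj_S2 // in h.
have D0 : (0 < D)%N by rewrite -(Hreg x); case: (N x) hy1.
move: h; rewrite natrM -(prednK D0) -addn1 natrD expr0n /= mulr0 addr0.
by move: (D.-1) => a; have : (0 : R) <= a%:R by []; lra.
Qed.

Lemma S2_no_cluster (dminus2 : forall z, z \in S2 -> dminus z = 2%N) y1 y2 z1 z2 :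
  y1 \in N x -> y2 \in N x -> y1 != y2 -> z1 \in S2 -> z2 \in S2 ->
  z1 \in N y1 -> z2 \in N y1 -> y2 \in N z1 -> y2 \in N z2 -> z1 = z2.
Proof.
move=> hy1 hy2 ny12 hz1 hz2 a1 a2 a3 a4; apply/eqP/negPn/negP => nz12.
pose Z := rem x (N y1).
pose B := rem y1 (N x).
have memZ z : (z \in Z) = (z != x) && (z \in N y1) by rewrite mem_rem_uniq.
have sZ : size Z = D.-1 by rewrite size_N_rem.
have sB : size B = D.-1 by rewrite size_rem ?Hreg.
have onceB z : z \in Z -> count (fun b => z \in N b) B = 1%N.
  rewrite memZ => /andP [zx zy].
  have zS2 : z \in S2 by apply/S2P; split=> //; exists y1.
  by rewrite count_rem -/(dminus z) dminus2 // hy1 zy.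
have leZ b : b \in B -> (1 + (b == y2) <= count (fun z => z \in N b) Z)%N.
  rewrite mem_rem_uniq // inE => /andP [by1 hb].
  case: (eqVneq b y2) => [->|nby2] /=.
    rewrite -size_filter; apply: (uniq_leq_size (s1 := [:: z1; z2])).
      by rewrite /= inE nz12.
    move=> z; rewrite !inE mem_filter memZ.
    case/orP=> /eqP -> ; rewrite -Hsym ?a3 ?a1 ?a4 ?a2.
      by case/S2P: hz1 => ->.
    by case/S2P: hz2 => ->.
  rewrite eq_sym in by1.
  have [z hz /andP [zy1 zb]] := common_neighbor_S2 dminus2 hy1 hb by1.
  rewrite addn0 -has_count; apply/hasP; exists z => //.
  by rewrite memZ zy1; case/S2P: hz => ->.
have y2B : y2 \in B by rewrite mem_rem_uniq // inE eq_sym ny12.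
have : (\sum_(b <- B) (1 + (b == y2)) <= \sum_(b <- B) count (fun z => z \in N b) Z)%N.
  by rewrite big_seq [X in (_ <= X)%N]big_seq; apply: leq_sum.
rewrite -(sum_count_exchange (fun z b => z \in N b)) (eq_big_seq _ onceB).
rewrite big_split /= !sum1_size sZ sB -(count_sumn (pred1 y2)).
rewrite count_uniq_mem ?rem_uniq // y2B addn1.
by rewrite ltnn.
Qed.

Lemma SSP_of_CD2 : SSP N D x.
Proof.
move=> s us hs; rewrite bin2 geq_half_double -mul2n.
apply: leq_trans size_S2_le; rewrite leq_mul2l /=.
by apply: uniq_leq_size => // z /hs /sphere2P.
Qed.

Lemma NCP_of_CD2 : NCP N x.
Proof.
move=> hdminus y1 y2 /sphere1_N1 hy1 /sphere1_N1 hy2 /eqP ny12 z1 z2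
  /sphere2P hz1 /sphere2P hz2 a1 a2 a3 a4.
apply: (S2_no_cluster _ hy1 hy2 ny12 hz1 hz2 a1 a3 a2 a4) => z hz.
exact: dminus_isE hz (hdminus z ((sphere2P z).2 hz)).
Qed.

End CurvatureInequalities.
End SecondSphere.

Local Close Scope ring_scope.
Unset Implicit Arguments.

Theorem theorem5 (R : realFieldType) (V : eqType) (N : V -> seq V) (D : nat)
  (Huniq : forall a, uniq (N a))
  (Hloop : forall a, a \notin N a)
  (Hsym : forall a b, (b \in N a) = (a \in N b))
  (Hreg : forall a, size (N a) = D)
  (Hbip : exists c : V -> bool, forall a b, b \in N a -> c a != c b)
  (x : V)
  (HCD : CD_at N (2%:R : R) x) :
  SSP N D x /\ NCP N x.
Proof.
have [col Hcol] := Hbip.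
split; first exact: (SSP_of_CD2 Huniq Hloop Hsym Hreg Hcol HCD).
exact: (NCP_of_CD2 Huniq Hloop Hsym Hreg Hcol HCD).
Qed.
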